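(* For every positive integer $n$, \[u(n,n+2)=\varepsilon(n,n+2)=\left\lfloor\frac{2n+4}{3}\right\rfloor.\]
   Context: All matrices are binary. For a nonempty set $S$ of columns of a binary matrix, let $z$ be the sum over the integers of the columns in $S$. $S$ is called $1$-free if no entry of $z$ equals $1$, and even if all entries of $z$ are even. For a binary $m\times n$ matrix $A$ with $m<n$: $\varepsilon(A)$ is the smallest cardinality of a nonempty even set of columns, and $u(A)$ the smallest cardinality of a nonempty $1$-free set of columns. For $m<n$, $\varepsilon(m,n)$ and $u(m,n)$ are the maxima of $\varepsilon(A)$, resp. $u(A)$, over all binary $m\times n$ matrices. *)

From mathcomp Require Import all_boot all_algebra.
Set Implicit Arguments. Unset Strict Implicit. Unset Printing Implicit Defensive.

Definition colsum (m n : nat) (A : 'M[bool]_(m, n)) (S : {set 'I_n}) (i : 'I_m) : nat :=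
  #|[set j in S | A i j]|.

Definition even_set (m n : nat) (A : 'M[bool]_(m, n)) (S : {set 'I_n}) : bool :=
  (S != set0) && [forall i, ~~ odd (colsum A S i)].

Definition one_free_set (m n : nat) (A : 'M[bool]_(m, n)) (S : {set 'I_n}) : bool :=
  (S != set0) && [forall i, colsum A S i != 1%N].

(* smallest cardinality of a nonempty even (resp. 1-free) set of columns;
   the default value n.+1 is never attained when m < n (such sets exist). *)
Definition epsA (m n : nat) (A : 'M[bool]_(m, n)) : nat :=
  \big[minn/n.+1]_(S : {set 'I_n} | even_set A S) #|S|.

Definition uA (m n : nat) (A : 'M[bool]_(m, n)) : nat :=
  \big[minn/n.+1]_(S : {set 'I_n} | one_free_set A S) #|S|.

Definition eps_mn (m n : nat) : nat := \max_(A : 'M[bool]_(m, n)) epsA A.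
Definition u_mn (m n : nat) : nat := \max_(A : 'M[bool]_(m, n)) uA A.

From mathcomp Require Import all_boot all_order all_algebra zify.
Set Implicit Arguments. Unset Strict Implicit. Unset Printing Implicit Defensive.
Import Order.TTheory.

(* Upper bound: when m + 2 <= n, the 2^n column sets of an m x n matrix fall
   into at most 2^m parity classes, so some class contains three sets. Their
   pairwise symmetric differences are nonempty even sets covering every column
   at most twice, so one of them has at most 2n/3 columns; even sets are 1-free.
   Lower bound: give row i < n - 1 ones in columns i + 3 and i mod 3, and the
   last row ones in columns 0, 1, 2. A 1-free set then contains column c iff it
   contains column c mod 3, and it contains at least two of the columns 0, 1, 2,
   so it misses at most one residue class mod 3, i.e. at most (n + 4)/3 of the
   n + 2 columns. *)

Section MinimalSets.
Variables (m n : nat) (A : 'M[bool]_(m, n)).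

Lemma even_set_one_free S : even_set A S -> one_free_set A S.
Proof.
case/andP=> S_nz /forallP evenA; rewrite /one_free_set S_nz; apply/forallP=> i.
by apply: contra (evenA i) => /eqP ->.
Qed.

Lemma epsA_le_card S : even_set A S -> epsA A <= #|S|.
Proof. by move=> evS; rewrite /epsA -minEnat -leEnat; apply: bigmin_le_cond. Qed.

Lemma uA_le_epsA : uA A <= epsA A.
Proof.
rewrite /uA /epsA -!minEnat -leEnat; apply: subset_bigmin_cond.
by apply/subsetP=> S; rewrite !inE => /even_set_one_free.
Qed.

Lemma leq_uA k : k <= n.+1 -> (forall S, one_free_set A S -> k <= #|S|) -> k <= uA A.
Proof. by move=> k_le k_leS; rewrite /uA -minEnat -leEnat; apply: le_bigmin. Qed.

Lemma colsum_sum S i : colsum A S i = \sum_j ((j \in S) && A i j).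
Proof. by rewrite /colsum -sum1_card big_mkcond; apply: eq_bigr => j _; rewrite inE. Qed.

Lemma colsumE S i : colsum A S i = #|S :&: [set j | A i j]|.
Proof. by apply: eq_card => j; rewrite !inE. Qed.

End MinimalSets.

Definition symdiff (T : finType) (S1 S2 : {set T}) := (S1 :\: S2) :|: (S2 :\: S1).

Lemma in_symdiff (T : finType) (S1 S2 : {set T}) j :
  (j \in symdiff S1 S2) = (j \in S1) (+) (j \in S2).
Proof. by rewrite !inE; case: (j \in S1); case: (j \in S2). Qed.

Lemma symdiff_eq0 (T : finType) (S1 S2 : {set T}) : (symdiff S1 S2 == set0) = (S1 == S2).
Proof.
apply/eqP/eqP=> [sd0 | ->]; last by rewrite /symdiff setDv setU0.
apply/setP=> j; move/setP: sd0 => /(_ j); rewrite in_symdiff inE.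
by case: (j \in S1); case: (j \in S2).
Qed.

Lemma card_indicator (T : finType) (S : {set T}) : #|S| = \sum_j (j \in S : nat).
Proof. by rewrite -sum1_card big_mkcond; apply: eq_bigr => j _; case: (j \in S). Qed.

Lemma card_symdiff3 (T : finType) (S1 S2 S3 : {set T}) :
  #|symdiff S1 S2| + #|symdiff S2 S3| + #|symdiff S3 S1| <= 2 * #|T|.
Proof.
rewrite !card_indicator -!big_split mulnC -sum_nat_const /=.
apply: leq_sum => j _; rewrite !in_symdiff.
by case: (j \in S1); case: (j \in S2); case: (j \in S3).
Qed.

Lemma odd_colsum_symdiff m n (A : 'M[bool]_(m, n)) S1 S2 i :
  odd (colsum A (symdiff S1 S2) i) = odd (colsum A S1 i) (+) odd (colsum A S2 i).
Proof.
have sumE : colsum A (symdiff S1 S2) i + 2 * \sum_j [&& j \in S1, j \in S2 & A i j]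
    = colsum A S1 i + colsum A S2 i.
  rewrite !colsum_sum big_distrr -!big_split; apply: eq_bigr => j _.
  by rewrite in_symdiff; case: (j \in S1); case: (j \in S2); case: (A i j).
by rewrite -oddD -sumE oddD oddM addbF.
Qed.

Lemma fiber_card_gt2 (T U : finType) (f : T -> U) : 2 * #|U| < #|T| ->
  exists y, 2 < #|[set x | f x == y]|.
Proof.
move=> card_lt; apply/existsP; apply: contraLR card_lt; rewrite negb_exists -leqNgt.
move=> /forallP small_fibers; rewrite -sum1_card (partition_big f predT) //=.
rewrite mulnC -sum_nat_const; apply: leq_sum => y _.
by rewrite sum1dep_card leqNgt small_fibers.
Qed.

Lemma epsA_le_two_thirds m n (A : 'M[bool]_(m, n)) : m.+2 <= n -> epsA A <= (2 * n) %/ 3.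
Proof.
move=> mn.
pose parity (S : {set 'I_n}) := [ffun i => odd (colsum A S i)].
have [p card_p] : exists p, 2 < #|[set S | parity S == p]|.
  apply: fiber_card_gt2; rewrite card_ffun card_bool card_ord.
  by rewrite -cardsT -powersetT card_powerset cardsT card_ord -expnS ltn_exp2l.
case/card_gt2P: card_p => [S1 [S2 [S3 [[]]]]].
rewrite !inE => /eqP p1 /eqP p2 /eqP p3 [n12 n23 n31].
have even_symdiff Sa Sb : Sa != Sb -> parity Sa = parity Sb -> even_set A (symdiff Sa Sb).
  move=> nab /ffunP pab; rewrite /even_set symdiff_eq0 nab; apply/forallP => i.
  by move: (pab i); rewrite !ffunE odd_colsum_symdiff => ->; rewrite addbb.
have e12 := epsA_le_card (even_symdiff _ _ n12 (etrans p1 (esym p2))).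
have e23 := epsA_le_card (even_symdiff _ _ n23 (etrans p2 (esym p3))).
have e31 := epsA_le_card (even_symdiff _ _ n31 (etrans p3 (esym p1))).
have := card_symdiff3 S1 S2 S3; rewrite card_ord; lia.
Qed.

Lemma card_modn_class N d t : 0 < d ->
  #|[set c : 'I_N | c %% d == t]| <= (N + d.-1) %/ d.
Proof.
move=> d_gt0.
have quo_lt (c : 'I_N) : c %/ d < (N + d.-1) %/ d.
  rewrite leq_divRL // mulSn; have := leq_trunc_div c d; have := ltn_ord c; lia.
pose quo (c : 'I_N) : 'I_((N + d.-1) %/ d) := Ordinal (quo_lt c).
rewrite -(@card_in_imset _ _ quo); first by rewrite -[X in _ <= X]card_ord max_card.
move=> x y; rewrite !inE => /eqP x_mod /eqP y_mod /(congr1 val) /= quo_eq.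
by apply: val_inj; rewrite /= (divn_eq x d) (divn_eq y d) quo_eq x_mod y_mod.
Qed.

Lemma card_setI_pair (T : finType) (S : {set T}) a b : a != b ->
  #|S :&: [set a; b]| = (a \in S) + (b \in S).
Proof.
move=> ab; rewrite setIUr cardsU -setIIr.
have -> : [set a] :&: [set b] = set0.
  by apply/setP=> x; rewrite !inE; case: (x =P a) => // ->; rewrite (negbTE ab).
have card_setI1 x : #|S :&: [set x]| = (x \in S).
  case: (boolP (x \in S)) => xS; first by rewrite (setIidPr _) ?cards1 ?sub1set.
  apply/eqP; rewrite cards_eq0; apply/eqP/setP=> y; rewrite !inE.
  by apply: contraNF xS => /andP[yS /eqP <-].
by rewrite setI0 cards0 subn0 !card_setI1.
Qed.

Definition extremal_mx n : 'M[bool]_(n, n + 2) :=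
  \matrix_(i < n, j < n + 2)
    if i == n.-1 :> nat then j < 3 else (j == i + 3 :> nat) || (j == i %% 3 :> nat).

Section ExtremalMatrix.
Variable n : nat.
Hypothesis n_gt0 : 0 < n.
Local Notation A := (extremal_mx n).

Definition res3 (c : 'I_(n + 2)) : 'I_3 := Ordinal (ltn_pmod c (isT : 0 < 3)).

Fact three_leq_ncols : 3 <= n + 2. Proof. by rewrite addn2 ltnS. Qed.

Definition col3 (t : 'I_3) : 'I_(n + 2) := widen_ord three_leq_ncols t.

Lemma col3_inj : injective col3.
Proof. by move=> s t /(congr1 val) /= /val_inj. Qed.

Lemma extremal_row_support (i : 'I_n) (c : 'I_(n + 2)) : i + 3 = c ->
  [set j | A i j] = [set c; col3 (res3 c)].
Proof.
move=> ic; apply/setP=> j; rewrite !inE mxE -!val_eqE /= -ic modnDr.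
by have -> : (i == n.-1 :> nat) = false by have := ltn_ord c; lia.
Qed.

Fact last_row_proof : n.-1 < n. Proof. by rewrite ltn_predL. Qed.

Definition last_row : 'I_n := Ordinal last_row_proof.

Lemma extremal_last_row_support : [set j | A last_row j] = col3 @: setT.
Proof.
apply/setP=> j; rewrite inE mxE eqxx; apply/idP/imsetP => [j_lt3 | [t _ ->]].
  by exists (Ordinal j_lt3); last exact: val_inj.
exact: (ltn_ord t).
Qed.

Section OneFree.
Variable S : {set 'I_(n + 2)}.
Hypothesis S_one_free : one_free_set A S.
Let P := [set t | col3 t \in S].

Lemma one_free_mem_res3 c : (c \in S) = (col3 (res3 c) \in S).
Proof.
case: (ltnP c 3) => c3; first by congr (_ \in S); apply: val_inj; rewrite /= modn_small.
have i_lt : c - 3 < n by have := ltn_ord c; lia.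
have c_neq : c != col3 (res3 c) by rewrite -val_eqE /=; have := ltn_pmod c (isT : 0 < 3); lia.
move: (forallP (andP S_one_free).2 (Ordinal i_lt)).
rewrite colsumE (@extremal_row_support (Ordinal i_lt) c) /=; last by lia.
by rewrite card_setI_pair //; case: (c \in S); case: (_ \in S).
Qed.

Lemma one_free_res3_preim : S = res3 @^-1: P.
Proof. by apply/setP=> c; rewrite !inE one_free_mem_res3. Qed.

Lemma one_free_residues_gt1 : 1 < #|P|.
Proof.
case/andP: S_one_free => /set0Pn [c cS] /forallP /(_ last_row).
rewrite colsumE extremal_last_row_support.
have -> : S :&: col3 @: setT = col3 @: P.
  apply/setP=> j; rewrite inE; apply/andP/imsetP => [[jS /imsetP[t _ jt]] | [t tP ->]].
    by exists t; rewrite // inE -jt.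
  by split; [rewrite inE in tP | apply: imset_f].
have : 0 < #|P| by apply/card_gt0P; exists (res3 c); rewrite inE -one_free_mem_res3.
by rewrite (card_imset _ col3_inj); lia.
Qed.

Lemma card_res3_fiber t : #|res3 @^-1: [set t]| <= (n + 4) %/ 3.
Proof.
have -> : res3 @^-1: [set t] = [set c : 'I_(n + 2) | c %% 3 == t].
  by apply/setP=> c; rewrite !inE -val_eqE.
by have := @card_modn_class (n + 2) 3 t isT; rewrite -addnA.
Qed.

Lemma extremal_one_free_card : (2 * (n + 2)) %/ 3 <= #|S|.
Proof.
have missing_le1 : #|~: P| <= 1.
  by have := one_free_residues_gt1; have := cardsC P; rewrite card_ord; lia.
have missing_le : #|res3 @^-1: ~: P| <= (n + 4) %/ 3.
  case: (set_0Vmem (~: P)) => [-> | [t tP]]; first by rewrite preimset0 cards0.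
  suff -> : ~: P = [set t] by apply: card_res3_fiber.
  by apply/setP=> s; move/card_le1P: missing_le1 => /(_ t tP) ->; rewrite inE.
have := cardsC (res3 @^-1: P); rewrite -preimsetC card_ord -one_free_res3_preim.
move: #|S| #|res3 @^-1: _| missing_le => s k; lia.
Qed.

End OneFree.

Lemma uA_extremal_mx : (2 * (n + 2)) %/ 3 <= uA A.
Proof. by apply: leq_uA => [|S]; [lia | apply: extremal_one_free_card]. Qed.

End ExtremalMatrix.

Theorem theorem7p1 (n : nat) : 0 < n ->
  u_mn n (n + 2) = ((2 * n + 4) %/ 3)%N /\ eps_mn n (n + 2) = ((2 * n + 4) %/ 3)%N.
Proof.
move=> n_gt0; rewrite (_ : 2 * n + 4 = 2 * (n + 2)); last by lia.
have upper_eps (A : 'M[bool]_(n, n + 2)) : epsA A <= (2 * (n + 2)) %/ 3 by apply: epsA_le_two_thirds; lia.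
have lower_u := uA_extremal_mx n_gt0.
split; apply/eqP; rewrite eqn_leq; apply/andP; split.
- by apply/bigmax_leqP => A _; apply: leq_trans (uA_le_epsA A) (upper_eps A).
- exact: leq_trans lower_u (leq_bigmax _).
- by apply/bigmax_leqP => A _; apply: upper_eps.
- exact: leq_trans lower_u (leq_trans (uA_le_epsA _) (leq_bigmax _)).
Qed.
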